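(* Let $H=(V,E,w)$ be a hypergraph in which every vertex has positive degree and every hyperedge has rank at least $2$, and let $G$ be its clique reduction. If $f$ is an eigenvector of $D_G^{-1}J_G$ corresponding to its smallest eigenvalue $\lambda_1(D_G^{-1}J_G)$, then $$\frac{f^\top J_H f}{f^\top D_H f}\le\lambda_1(D_G^{-1}J_G),$$ and the inequality is strict if $\min_{e\in E}\mathrm{rank}(e)>2$.
   Context: A hypergraph $H=(V,E,w)$ has vertex set $V$ with $|V|=n$, hyperedges $E$ (subsets of $V$), weights $w:E\to\mathbb{R}_{>0}$; $\mathrm{rank}(e)=|e|$, $\deg(v)=\sum_{e\ni v}w(e)$, $D_H=\mathrm{diag}(\deg(v))$. For $f\in\mathbb{R}^n$, $e\in E$: $\Delta_f(e)=\max_{u\in e}f(u)+\min_{v\in e}f(v)$, $S_f(e)=\{v\in e:f(v)=\max_{u\in e}f(u)\}$, $I_f(e)=\{v\in e:f(v)=\min_{u\in e}f(u)\}$. Operator $J_H$: for $f$, let $r\in\mathbb{R}^n$ be the unique vector for which there are numbers $r_e(v)$ with $r(v)=\sum_e r_e(v)$, $r_e(v)=0$ unless $v\in S_f(e)\cup I_f(e)$, and: (1) $\sum_{v\in S_f(e)}\deg(v)r_e(v)=\sum_{v\in I_f(e)}\deg(v)r_e(v)=-w(e)\Delta_f(e)$ for all $e$; (2a) if $|r_e(u)|>0$, $u\in S_f(e)$: when $\Delta_f(e)>0$, $r(u)=\max_{v\in S_f(e)}r(v)$, when $\Delta_f(e)<0$, $r(u)=r(v)$ for all $v\in S_f(e)$;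 (2b) if $|r_e(u)|>0$, $u\in I_f(e)$: when $\Delta_f(e)<0$, $r(u)=\min_{v\in I_f(e)}r(v)$, when $\Delta_f(e)>0$, $r(u)=r(v)$ for all $v\in I_f(e)$. Then $J_H f:=-D_H r$. (One has $f^\top J_H f=\sum_e w(e)\Delta_f(e)^2$.) Clique reduction $G$: the graph on $V$ in which, for each hyperedge $e$ and each pair of distinct $u,v\in e$, weight $w(e)/(\mathrm{rank}(e)-1)$ is added to edge $\{u,v\}$; $D_G$, $A_G$ are its degree and weighted adjacency matrices and $J_G=D_G+A_G$. *)

From HB Require Import structures.
From mathcomp Require Import all_boot all_order all_algebra.
Set Implicit Arguments. Unset Strict Implicit. Unset Printing Implicit Defensive.
Import Order.TTheory GRing.Theory Num.Theory.
Local Open Scope ring_scope.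

Section Hypergraph.
Variables (R : realFieldType) (n m : nat) (E : 'I_m -> {set 'I_n}) (w : 'I_m -> R).

(* max / min of a function over a (nonempty) set; 0 on the empty set (never used) *)
Definition maxE (g : 'I_n -> R) (A : {set 'I_n}) : R :=
  if [pick v in A] is Some v0 then \big[Num.max/g v0]_(v in A) g v else 0.
Definition minE (g : 'I_n -> R) (A : {set 'I_n}) : R :=
  if [pick v in A] is Some v0 then \big[Num.min/g v0]_(v in A) g v else 0.

Definition rankE (i : 'I_m) : nat := #|E i|.
Definition degH (v : 'I_n) : R := \sum_(i < m | v \in E i) w i.
Definition DH : 'M[R]_n := diag_mx (\row_v degH v).

Definition Delta (f : 'I_n -> R) (i : 'I_m) : R := maxE f (E i) + minE f (E i).
Definition Sf (f : 'I_n -> R) (i : 'I_m) : {set 'I_n} :=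
  [set v in E i | f v == maxE f (E i)].
Definition If (f : 'I_n -> R) (i : 'I_m) : {set 'I_n} :=
  [set v in E i | f v == minE f (E i)].

(* r is the vector from the definition of J_H applied to f *)
Definition is_Jr (f r : 'I_n -> R) : Prop :=
  exists re : 'I_m -> 'I_n -> R,
    (forall v, r v = \sum_(i < m) re i v) /\
    forall i : 'I_m,
      (forall v, v \notin Sf f i :|: If f i -> re i v = 0) /\
      (\sum_(v in Sf f i) degH v * re i v = - (w i * Delta f i)) /\
      (\sum_(v in If f i) degH v * re i v = - (w i * Delta f i)) /\
      (forall u, u \in Sf f i -> re i u != 0 ->
         (0 < Delta f i -> r u = maxE r (Sf f i)) /\
         (Delta f i < 0 -> forall v, v \in Sf f i -> r u = r v)) /\
      (forall u, u \in If f i -> re i u != 0 ->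
         (Delta f i < 0 -> r u = minE r (If f i)) /\
         (0 < Delta f i -> forall v, v \in If f i -> r u = r v)).

Definition JH_of (r : 'cV[R]_n) : 'cV[R]_n := - (DH *m r).

Definition AG : 'M[R]_n :=
  \matrix_(u, v) \sum_(i < m | [&& u \in E i, v \in E i & u != v])
                    w i / (rankE i).-1%:R.
Definition DG : 'M[R]_n := diag_mx (\row_u \sum_v AG u v).
Definition JG : 'M[R]_n := DG + AG.

End Hypergraph.

Definition quad (R : realFieldType) (n : nat) (f : 'cV[R]_n) (M : 'M[R]_n) : R :=
  (f^T *m M *m f) ord0 ord0.

Definition dotv (R : realFieldType) (n : nat) (f v : 'cV[R]_n) : R :=
  (f^T *m v) ord0 ord0.

(* The clique reduction preserves degrees, so D_G = D_H =: D and
   f^T J_G f = lam f^T D f.  Both quadratic forms split over hyperedges: e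
   contributes w_e (Σ_{v∈e} f_v^2 + (Σ_{u≠v∈e} f_u f_v) / (|e| - 1)) to f^T J_G f
   and, by the defining properties of r, w_e (max_e f + min_e f)^2 to f^T J_H f
   (2 w_e c^2 if f = c is constant on e).  If f attains its maximum on e at p and
   its minimum at q, the difference of the two contributions is w_e / (|e| - 1)
   times |e| Σ_x f_x^2 + (Σ_x f_x)^2 + 2 Σ_x (f_x - f_q) (f_p - f_x) >= 0, the
   sums running over e \ {p, q}; this gives the inequality.  If all ranks exceed
   2, equality forces every contribution to f^T J_H f to be w_e Σ_{v∈e} f_v^2,
   so the Rayleigh quotient would be 1.  But lam < 1: D^-1 J_G is I plus a
   conjugate of the symmetric, zero-diagonal matrix D^-1/2 A_G D^-1/2, which has
   a positive entry and hence, by the spectral theorem, a negative eigenvalue. *)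

From HB Require Import structures.
From mathcomp Require Import all_boot all_order all_algebra.
From mathcomp Require Import ring lra.
From mathcomp Require Import complex.
Set Implicit Arguments. Unset Strict Implicit. Unset Printing Implicit Defensive.
Import Order.TTheory GRing.Theory Num.Theory.
Local Open Scope ring_scope.

Section MatrixFacts.
Variables (F : fieldType) (n : nat).
Implicit Types (S P : 'M[F]_n) (d : 'rV[F]_n).

Lemma eigenvalue_conj P S mu : P \in unitmx ->
  eigenvalue S mu -> eigenvalue (P *m S *m invmx P) mu.
Proof.
move=> Punit /eigenvalueP [v vS v0]; apply/eigenvalueP; exists (v *m invmx P).
  by rewrite !mulmxA mulmxKV // vS scalemxAl.
by rewrite (can2_eq (mulmxKV Punit) (mulmxK Punit)) mul0mx.
Qed.

Lemma eigenvalue_add1 S mu : eigenvalue S mu -> eigenvalue (1%:M + S) (1 + mu).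
Proof.
case/eigenvalueP => v vS v0; apply/eigenvalueP; exists v => //.
by rewrite mulmxDr mulmx1 vS scalerDl scale1r.
Qed.

Lemma invmx_diag d : (forall i, d 0 i != 0) ->
  invmx (diag_mx d) = diag_mx (\row_i (d 0 i)^-1).
Proof.
move=> d0; have dd : diag_mx d *m diag_mx (\row_i (d 0 i)^-1) = 1%:M.
  by rewrite mulmx_diag -diag_const_mx; congr diag_mx; apply/rowP => i; rewrite !mxE divff.
have [dunit _] := mulmx1_unit dd.
by rewrite -[RHS]mul1mx -(mulVmx dunit) -mulmxA dd mulmx1.
Qed.

End MatrixFacts.

Section NormalSpectrum.
Local Open Scope sesquilinear_scope.
Context {C : numClosedFieldType} {n : nat}.
Implicit Types (A : 'M[C]_n) (y : 'rV[C]_n).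

Lemma spectral_diag_eigenvalue A j :
  A \is normalmx -> eigenvalue A (spectral_diag A 0 j).
Proof.
move=> /orthomx_spectralP Aspec; have Punit := spectral_unit A.
set P := spectralmx A in Aspec Punit *; set d := spectral_diag A in Aspec *.
apply/eigenvalueP; exists (row j P).
  rewrite {1}Aspec !mulmxA rowE -(mulmxA _ P) mulmxV // mulmx1.
  by rewrite -(rowE j (diag_mx d)) row_diag_mx -scalemxAl -rowE.
apply: contraTneq isT => Pj0.
have : delta_mx 0 j = row j P *m invmx P by rewrite rowE mulmxK.
rewrite Pj0 mul0mx => /matrixP /(_ 0 j); rewrite !mxE !eqxx /=.
by move/eqP; rewrite oner_eq0.
Qed.

Lemma normalmx_rayleigh_ge A y j0 : A \is normalmx ->
  (forall j, spectral_diag A 0 j0 <= spectral_diag A 0 j) ->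
  spectral_diag A 0 j0 * (y *m y^t*) 0 0 <= (y *m A *m y^t*) 0 0.
Proof.
move=> /orthomx_spectralP Aspec dmin.
have Punitary := spectral_unitarymx A; have Punit := spectral_unit A.
set P := spectralmx A in Aspec Punitary Punit; set d := spectral_diag A in Aspec dmin *.
pose u := P *m y^t*.
have yPV : y *m invmx P = u^t* by rewrite invmx_unitary // trmx_mul map_mxM trmxCK.
have -> : y *m A *m y^t* = u^t* *m diag_mx d *m u by rewrite {1}Aspec !mulmxA yPV -!mulmxA.
have -> : y *m y^t* = u^t* *m u.
  by rewrite -yPV -mulmxA (mulmxA (invmx P)) mulVmx // mul1mx.
rewrite mul_mx_diag !mxE mulr_sumr; apply: ler_sum => j _; rewrite !mxE.
set s := \sum_(_ < _) _.
rewrite -subr_ge0 (_ : _ - _ = (d 0 j - d 0 j0) * (s * s^* )); last by ring.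
by rewrite mulr_ge0 ?subr_ge0 ?mul_conjC_ge0.
Qed.

End NormalSpectrum.

Lemma symmetric_eigenvalue_le_rayleigh (R : rcfType) n (S : 'M[R]_n) (y : 'rV[R]_n) :
  (0 < n)%N -> S^T = S ->
  exists2 mu, eigenvalue S mu & mu * (y *m y^T) 0 0 <= (y *m S *m y^T) 0 0.
Proof.
move=> n_gt0 Ssym; pose toC := real_complex R; pose Sc := map_mx toC S.
have Sc_herm : Sc \is hermsymmx.
  apply: realsym_hermsym; last first.
    by apply/mxOverP => i j; rewrite mxE; apply/complex_realP; exists (S i j).
  by rewrite qualifE expr0 scale1r map_mx_id // /Sc map_trmx Ssym.
set d := spectral_diag Sc.
have d_real j : (complex.Re (d 0 j))%:C%C = d 0 j.
  by rewrite RRe_real // (mxOverP (hermitian_spectral_diag_real Sc_herm)).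
pose j0 := Order.arg_min (Ordinal n_gt0) xpredT (fun j => complex.Re (d 0 j)).
have dmin j : d 0 j0 <= d 0 j.
  by rewrite -d_real -[d 0 j]d_real lecR /j0; case: arg_minP => // k _; apply.
exists (complex.Re (d 0 j0)).
  by rewrite -(eigenvalue_map toC) /= d_real spectral_diag_eigenvalue // hermitian_normalmx.
have yC_real : ((map_mx toC y) ^t* )%sesqui = (map_mx toC y)^T.
  by apply/matrixP => i j; rewrite !mxE conj_Creal //; apply/complex_realP; eexists.
have := normalmx_rayleigh_ge (map_mx toC y) (hermitian_normalmx Sc_herm) dmin.
rewrite yC_real map_trmx -!map_mxM !mxE.
by rewrite -d_real -rmorphM lecR.
Qed.

Lemma symmetric_hollow_neg_eigenvalue (R : rcfType) n (S : 'M[R]_n) a b :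
  S^T = S -> (forall i, S i i = 0) -> a != b -> 0 < S a b ->
  exists2 mu, eigenvalue S mu & mu < 0.
Proof.
move=> Ssym S0 ab Sab_gt0; pose y : 'rV[R]_n := delta_mx 0 a - delta_mx 0 b.
have form M : (y *m M *m y^T) 0 0 = M a a - M a b - M b a + M b b.
  by rewrite /y raddfB /= !trmx_delta !mulmxBl !mulmxBr -!rowE -!colE !mxE; ring.
have y_norm : (y *m y^T) 0 0 = 2.
  rewrite -[y in y *m _]mulmx1 form !mxE !eqxx (negbTE ab) eq_sym (negbTE ab) /=.
  by rewrite !subr0.
have n_gt0 : (0 < n)%N := leq_ltn_trans (leq0n a) (ltn_ord a).
have [mu Smu ray] := symmetric_eigenvalue_le_rayleigh y n_gt0 Ssym.
exists mu => //; move: ray.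
have Sba : S b a = S a b by rewrite -[in LHS]Ssym mxE.
rewrite y_norm form !S0 Sba; lra.
Qed.

Section ExtremeValues.
Variables (R : realFieldType) (n : nat) (g : 'I_n -> R) (A : {set 'I_n}).

Lemma maxE_ge v : v \in A -> g v <= maxE g A.
Proof.
rewrite /maxE; case: pickP => [v0 _|A0] vA; first exact: le_bigmax_cond.
by move: (A0 v); rewrite /= vA.
Qed.

Lemma minE_le v : v \in A -> minE g A <= g v.
Proof.
rewrite /minE; case: pickP => [v0 _|A0] vA; first exact: bigmin_le_cond.
by move: (A0 v); rewrite /= vA.
Qed.

Lemma maxE_mem v : v \in A -> exists2 p, p \in A & g p = maxE g A.
Proof.
rewrite /maxE; case: pickP => [v0 v0A|A0] vA; last by move: (A0 v); rewrite /= vA.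
apply: (big_ind (fun x => exists2 p, p \in A & g p = x))
  => [|x y [p1 p1A <-] [p2 p2A <-]|u uA]; [by exists v0 | | by exists u].
by case: (leP (g p1) (g p2)) => _; [exists p2 | exists p1].
Qed.

Lemma minE_mem v : v \in A -> exists2 p, p \in A & g p = minE g A.
Proof.
rewrite /minE; case: pickP => [v0 v0A|A0] vA; last by move: (A0 v); rewrite /= vA.
apply: (big_ind (fun x => exists2 p, p \in A & g p = x))
  => [|x y [p1 p1A <-] [p2 p2A <-]|u uA]; [by exists v0 | | by exists u].
by case: (leP (g p1) (g p2)) => _; [exists p1 | exists p2].
Qed.

End ExtremeValues.

Section QuadraticForms.
Variables (R : realFieldType) (n : nat) (f : 'cV[R]_n).

Lemma quad_sum (M : 'M[R]_n) : quad f M = \sum_u \sum_v f u 0 * M u v * f v 0.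
Proof.
rewrite /quad mxE exchange_big /=; apply: eq_bigr => v _.
by rewrite mxE mulr_suml; apply: eq_bigr => u _; rewrite mxE.
Qed.

Lemma quadD (M N : 'M[R]_n) : quad f (M + N) = quad f M + quad f N.
Proof. by rewrite /quad mulmxDr mulmxDl mxE. Qed.

Lemma quad_diag (d : 'rV[R]_n) : quad f (diag_mx d) = \sum_v d 0 v * f v 0 ^+ 2.
Proof.
by rewrite /quad mul_mx_diag !mxE; apply: eq_bigr => v _; rewrite !mxE; ring.
Qed.

Lemma quad_eigvec (D J : 'M[R]_n) lam : D \in unitmx ->
  invmx D *m J *m f = lam *: f -> quad f J = lam * quad f D.
Proof.
move=> Dunit Jf; have JfE : J *m f = lam *: (D *m f).
  by rewrite -[J *m f](mulKVmx Dunit) [invmx D *m _]mulmxA Jf scalemxAr.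
by rewrite /quad -mulmxA JfE -scalemxAr mxE mulmxA.
Qed.

Lemma quad_diag_gt0 (d : 'rV[R]_n) : (forall v, 0 < d 0 v) -> f != 0 ->
  0 < quad f (diag_mx d).
Proof.
move=> d_gt0; apply: contraNT; rewrite -leNgt quad_diag => sum_le0.
have term_ge0 v : true -> 0 <= d 0 v * f v 0 ^+ 2.
  by move=> _; rewrite mulr_ge0 ?sqr_ge0 ?ltW.
have /(psumr_eq0P term_ge0) term0 : \sum_v d 0 v * f v 0 ^+ 2 = 0.
  by apply/eqP; rewrite eq_le sum_le0 sumr_ge0.
apply/eqP/matrixP => v j; rewrite ord1 mxE.
by move/eqP: (term0 v isT); rewrite mulf_eq0 (gt_eqF (d_gt0 v)) sqrf_eq0 => /eqP.
Qed.

End QuadraticForms.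

Section CliqueReduction.
Variables (R : realFieldType) (n m : nat) (E : 'I_m -> {set 'I_n}) (w : 'I_m -> R).
Hypothesis hrank : forall i, (2 <= rankE E i)%N.

Definition clique_weight i : R := w i / (rankE E i).-1%:R.

Lemma rankE_pred_neq0 i : (rankE E i).-1%:R != 0 :> R.
Proof. by rewrite pnatr_eq0 -lt0n; case: (rankE E i) (hrank i) => [|[|k]]. Qed.

Lemma trmx_AG : (AG E w)^T = AG E w.
Proof. by apply/matrixP => u v; rewrite !mxE; apply: eq_bigl => i; rewrite andbCA eq_sym. Qed.

Lemma AG_diag u : AG E w u u = 0.
Proof. by rewrite mxE big_pred0 // => i; rewrite eqxx !andbF. Qed.

Lemma AG_rowsum u : \sum_v AG E w u v = degH E w u.
Proof.
rewrite /degH; under eq_bigr do rewrite mxE big_mkcond.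
rewrite exchange_big /= [RHS]big_mkcond; apply: eq_bigr => i _.
case uEi: (u \in E i); last by rewrite big1.
rewrite -big_mkcond /= (eq_bigl (fun v => v \in E i :\ u)); last first.
  by move=> v; rewrite in_setD1 andbC eq_sym.
have card_rest : #|E i :\ u| = (rankE E i).-1 by rewrite /rankE (cardsD1 u (E i)) uEi.
by rewrite sumr_const card_rest -[_ *+ _]mulr_natr divfK ?rankE_pred_neq0.
Qed.

Lemma DH_unit : (forall v, 0 < degH E w v) -> DH E w \in unitmx.
Proof.
move=> deg_gt0; rewrite unitmxE det_diag unitfE; apply/prodf_neq0 => v _.
by rewrite mxE gt_eqF.
Qed.

Lemma DG_DH : DG E w = DH E w.
Proof. by congr diag_mx; apply/rowP => u; rewrite !mxE AG_rowsum. Qed.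

Variable f : 'cV[R]_n.

Definition sumf (A : {set 'I_n}) : R := \sum_(v in A) f v 0.
Definition sumf2 (A : {set 'I_n}) : R := \sum_(v in A) f v 0 ^+ 2.

Definition clique_part i : R :=
  w i * sumf2 (E i) + clique_weight i * (sumf (E i) ^+ 2 - sumf2 (E i)).
Definition hyper_part (re : 'I_n -> R) : R := - \sum_v f v 0 * (degH E w v * re v).

Lemma quad_DH : quad f (DH E w) = \sum_i w i * sumf2 (E i).
Proof.
rewrite quad_diag; under eq_bigr do rewrite mxE /degH mulr_suml big_mkcond.
rewrite exchange_big /=; apply: eq_bigr => i _.
by rewrite /sumf2 mulr_sumr [RHS]big_mkcond.
Qed.

Lemma quad_AG :
  quad f (AG E w) = \sum_i clique_weight i * (sumf (E i) ^+ 2 - sumf2 (E i)).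
Proof.
rewrite quad_sum.
under eq_bigr => u _ do under eq_bigr => v _ do
  rewrite mxE mulr_sumr mulr_suml big_mkcond.
under eq_bigr do rewrite exchange_big.
rewrite exchange_big; apply: eq_bigr => i _ /=.
have sq_sum : sumf (E i) ^+ 2 - sumf2 (E i) =
    \sum_(u in E i) \sum_(v in E i :\ u) f u 0 * f v 0.
  rewrite /sumf2 expr2 {1}/sumf mulr_suml -sumrB; apply: eq_bigr => u uEi.
  by rewrite /sumf (big_setD1 u uEi) /= mulrDr -expr2 addrAC subrr add0r mulr_sumr.
rewrite sq_sum mulr_sumr [RHS]big_mkcond; apply: eq_bigr => u _.
case: (boolP (u \in E i)) => uEi /=; last by rewrite big1 // => v _; rewrite uEi.
rewrite mulr_sumr [RHS]big_mkcond; apply: eq_bigr => v _.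
rewrite in_setD1 andbC eq_sym /clique_weight.
by case: ifP => // _; ring.
Qed.

Lemma quad_JG : quad f (JG E w) = \sum_i clique_part i.
Proof. by rewrite quadD DG_DH quad_DH quad_AG -big_split. Qed.

Lemma dotv_JH (r : 'cV[R]_n) (re : 'I_m -> 'I_n -> R) :
  (forall v, r v 0 = \sum_i re i v) ->
  dotv f (JH_of E w r) = \sum_i hyper_part (re i).
Proof.
move=> r_sum; rewrite /dotv /JH_of mulmxN mxE /DH mul_diag_mx mxE.
rewrite sumrN exchange_big /=; congr (- _); apply: eq_bigr => v _.
by rewrite !mxE r_sum !mulr_sumr.
Qed.

Lemma sumf2_const i a : (forall v, v \in E i -> f v 0 = a) ->
  sumf2 (E i) = (rankE E i)%:R * a ^+ 2.
Proof.
move=> fa; rewrite /sumf2 (eq_bigr (fun=> a ^+ 2)) => [|v /fa -> //].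
by rewrite sumr_const mulr_natl.
Qed.

Lemma clique_part_const i a : (forall v, v \in E i -> f v 0 = a) ->
  clique_part i = 2 * w i * (rankE E i)%:R * a ^+ 2.
Proof.
move=> fa; have sumf_a : sumf (E i) = (rankE E i)%:R * a.
  by rewrite /sumf (eq_bigr _ fa) sumr_const mulr_natl.
have := rankE_pred_neq0 i.
rewrite /clique_part /clique_weight sumf_a (sumf2_const fa).
case: (rankE E i) (hrank i) => [|[|k]] //= _.
rewrite -[k.+2]addn2 -[k.+1]addn1 !natrD.
by move: (k%:R) => K K1; field.
Qed.

Lemma sum_cross (X : {set 'I_n}) c d :
  \sum_(x in X) (f x 0 - c) * (d - f x 0) =
  (d + c) * sumf X - sumf2 X - d * c * #|X|%:R.
Proof.
rewrite (eq_bigr (fun x => (d + c) * f x 0 - f x 0 ^+ 2 - d * c)); last first.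
  by move=> x _; ring.
by rewrite !sumrB -mulr_sumr sumr_const mulr_natr.
Qed.

Lemma edge_split_pair i p q : p \in E i -> q \in E i -> p != q ->
  let X := E i :\ p :\ q in
  [/\ rankE E i = #|X|.+2, sumf (E i) = f p 0 + (f q 0 + sumf X)
    & sumf2 (E i) = f p 0 ^+ 2 + (f q 0 ^+ 2 + sumf2 X)].
Proof.
move=> pEi qEi pq X; have qEip : q \in E i :\ p by rewrite in_setD1 eq_sym pq.
split.
- by rewrite /rankE (cardsD1 p (E i)) (cardsD1 q (E i :\ p)) pEi qEip.
- by rewrite /sumf (big_setD1 p pEi) (big_setD1 q qEip).
- by rewrite /sumf2 (big_setD1 p pEi) (big_setD1 q qEip).
Qed.

Lemma clique_part_sub_pair i p q : p \in E i -> q \in E i -> p != q ->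
  let X := E i :\ p :\ q in
  clique_part i - w i * (f p 0 + f q 0) ^+ 2 =
  clique_weight i * ((rankE E i)%:R * sumf2 X + sumf X ^+ 2 +
                     2 * \sum_(x in X) (f x 0 - f q 0) * (f p 0 - f x 0)).
Proof.
move=> pEi qEi pq X; have [rankX sumfE sumf2E] := edge_split_pair pEi qEi pq.
have := rankE_pred_neq0 i.
rewrite /clique_part /clique_weight sum_cross sumfE sumf2E rankX /=.
rewrite -[#|X|.+2]addn2 -[#|X|.+1]addn1 !natrD.
by move: (#|X|%:R) => k k1; field.
Qed.

Local Notation g := (fun v => f v 0).

Section Edge.
Variables (i : 'I_m) (re : 'I_n -> R).
Hypothesis re_supp : forall v, v \notin Sf E g i :|: If E g i -> re v = 0.
Hypothesis re_S : \sum_(v in Sf E g i) degH E w v * re v = - (w i * Delta E g i).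
Hypothesis re_I : \sum_(v in If E g i) degH E w v * re v = - (w i * Delta E g i).
Local Notation a := (maxE g (E i)).
Local Notation b := (minE g (E i)).

Lemma hyper_part_split : hyper_part re =
  - (a * \sum_(v in Sf E g i) degH E w v * re v +
     b * \sum_(v | v \notin Sf E g i) degH E w v * re v).
Proof.
congr (- _); rewrite (bigID (mem (Sf E g i))) /= !mulr_sumr; congr (_ + _).
  by apply: eq_bigr => v; rewrite inE => /andP [_ /eqP ->].
apply: eq_bigr => v vS; case: (boolP (v \in If E g i)) => [|vI].
  by rewrite inE => /andP [_ /eqP ->].
by rewrite re_supp ?mulr0 // in_setU negb_or vS.
Qed.

Lemma hyper_part_const : a = b -> hyper_part re = 2 * w i * a ^+ 2.
Proof.
move=> ab; rewrite hyper_part_split re_S big1 => [|v vS]; last first.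
  rewrite re_supp ?mulr0 // in_setU negb_or vS /= !inE.
  by apply: contra vS; rewrite !inE -ab.
by rewrite /Delta -ab; ring.
Qed.

Lemma hyper_part_nonconst : a != b -> hyper_part re = w i * (a + b) ^+ 2.
Proof.
move=> ab; rewrite hyper_part_split re_S.
have -> : \sum_(v | v \notin Sf E g i) degH E w v * re v = - (w i * Delta E g i).
  rewrite -re_I [LHS]big_mkcond [RHS]big_mkcond; apply: eq_bigr => v _.
  case: (boolP (v \in Sf E g i)); case: (boolP (v \in If E g i)) => //=.
  - by rewrite !inE => /andP [_ /eqP ->] /andP [_ /eqP fa]; rewrite fa eqxx in ab.
  - by move=> vI vS; rewrite re_supp ?mulr0 // in_setU negb_or vS.
by rewrite /Delta; ring.
Qed.

Hypothesis w_gt0 : 0 < w i.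

Lemma edge_values_range v : v \in E i -> b <= f v 0 <= a.
Proof. by move=> vE; rewrite (minE_le g vE) (maxE_ge g vE). Qed.

Lemma hyper_part_le_clique_part_const : a = b ->
  hyper_part re <= clique_part i /\
  (hyper_part re = clique_part i -> hyper_part re = w i * sumf2 (E i)).
Proof.
move=> ab; have fa v : v \in E i -> f v 0 = a.
  move=> /edge_values_range; rewrite -ab => /andP [fa af].
  by apply/eqP; rewrite eq_le fa af.
rewrite hyper_part_const // (clique_part_const fa) (sumf2_const fa).
have rank2 : 2 <= (rankE E i)%:R :> R by rewrite ler_nat; apply: hrank.
have wa : 0 <= w i * a ^+ 2 by rewrite mulr_ge0 ?sqr_ge0 ?ltW.
by split=> [|eq_parts]; nra.
Qed.

Lemma hyper_part_le_clique_part_nonconst : a != b ->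
  hyper_part re <= clique_part i /\
  ((2 < rankE E i)%N -> hyper_part re = clique_part i ->
   hyper_part re = w i * sumf2 (E i)).
Proof.
move=> ab; have [v0 v0E] : exists v0, v0 \in E i.
  by apply/set0Pn; rewrite -card_gt0 (leq_trans _ (hrank i)).
have [p pE fp] := maxE_mem g v0E; have [q qE fq] := minE_mem g v0E.
have pq : p != q by apply: contraNneq ab => pq; rewrite -fp -fq pq.
have [rankX _ sumf2E] := edge_split_pair pE qE pq.
have := clique_part_sub_pair pE qE pq; rewrite /= fp fq.
rewrite hyper_part_nonconst //; rewrite fp fq in sumf2E; move: rankX sumf2E.
set X := E i :\ p :\ q; set P := \sum_(x in X) _ => rankX sumf2E gap.
have P_ge0 : 0 <= P.
  apply: sumr_ge0 => x /setD1P [_ /setD1P [_ /edge_values_range /andP [bx xa]]].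
  by rewrite mulr_ge0 ?subr_ge0.
have kt_ge0 : 0 <= (rankE E i)%:R * sumf2 X.
  by rewrite mulr_ge0 ?sumr_ge0 // => x _; rewrite sqr_ge0.
have s_ge0 := sqr_ge0 (sumf X).
have cw_gt0 : 0 < clique_weight i by rewrite divr_gt0 // rankX ltr0n.
split; first by rewrite -subr_ge0 gap; apply: mulr_ge0; [exact: ltW | lra].
move=> rank_gt2 eq_parts.
have gap0 : (rankE E i)%:R * sumf2 X + sumf X ^+ 2 + 2 * P = 0.
  apply/eqP; move: gap; rewrite -eq_parts subrr => /esym/eqP.
  by rewrite mulf_eq0 gt_eqF.
have t0 : sumf2 X = 0.
  have /eqP : (rankE E i)%:R * sumf2 X = 0 by lra.
  by rewrite mulf_eq0 pnatr_eq0 rankX => /eqP.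
have s0 : sumf X = 0 by apply/eqP; rewrite -sqrf_eq0; apply/eqP; lra.
have X_gt0 : 0 < #|X|%:R :> R by rewrite ltr0n -2!ltnS -rankX.
have := sum_cross X b a; rewrite -/P t0 s0 (_ : P = 0); last by lra.
rewrite mulr0 !subr0 sub0r => /esym/eqP.
rewrite oppr_eq0 mulf_eq0 (gt_eqF X_gt0) orbF => /eqP ab0.
rewrite sumf2E t0 addr0.
have -> : w i * (a + b) ^+ 2 = w i * (a ^+ 2 + b ^+ 2) + 2 * w i * (a * b) by ring.
by rewrite ab0 mulr0 addr0.
Qed.

Lemma hyper_part_le_clique_part :
  hyper_part re <= clique_part i /\
  ((2 < rankE E i)%N -> hyper_part re = clique_part i ->
   hyper_part re = w i * sumf2 (E i)).
Proof.
have [ab | ab] := eqVneq a b; last exact: hyper_part_le_clique_part_nonconst.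
by have [le eq_case] := hyper_part_le_clique_part_const ab; split=> // _.
Qed.

End Edge.

End CliqueReduction.

Section NormalizedAdjacency.
Variables (R : rcfType) (n m : nat) (E : 'I_m -> {set 'I_n}) (w : 'I_m -> R).
Hypothesis hw : forall i, 0 < w i.
Hypothesis hdeg : forall v, 0 < degH E w v.
Hypothesis hrank : forall i, (2 <= rankE E i)%N.

Lemma AG_neighbour v : exists2 u, u != v & 0 < AG E w u v.
Proof.
have [i vEi] : exists i, v \in E i.
  apply/existsP; move: (hdeg v); apply: contraTT; rewrite negb_exists => /forallP vE.
  by rewrite /degH big_pred0 ?ltxx // => i; exact/negbTE/vE.
have [u] : exists u, u \in E i :\ v.
  apply/set0Pn; rewrite -card_gt0.
  by have := hrank i; rewrite /rankE (cardsD1 v (E i)) vEi.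
rewrite in_setD1 => /andP [uv uEi]; exists u => //.
rewrite mxE (bigD1 i) /=; last by rewrite uEi vEi uv.
rewrite ltr_wpDr ?sumr_ge0 // => [j _|].
  by rewrite divr_ge0 ?ler0n ?ltW.
by rewrite divr_gt0 // ltr0n; case: (rankE E i) (hrank i) => [|[|k]].
Qed.

Definition sqrt_deg_inv : 'M[R]_n := diag_mx (\row_v (Num.sqrt (degH E w v))^-1).
Definition norm_adj : 'M[R]_n := sqrt_deg_inv *m AG E w *m sqrt_deg_inv.

Lemma norm_adjE u v :
  norm_adj u v = AG E w u v / (Num.sqrt (degH E w u) * Num.sqrt (degH E w v)).
Proof.
rewrite /norm_adj mul_mx_diag mxE mul_diag_mx !mxE.
by set S := \sum_(_ < _ | _) _; rewrite invfM mulrA [_^-1 * S]mulrC.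
Qed.

Lemma trmx_norm_adj : norm_adj^T = norm_adj.
Proof. by rewrite !trmx_mul tr_diag_mx trmx_AG mulmxA. Qed.

Lemma sqrt_deg_inv_unit : sqrt_deg_inv \in unitmx.
Proof.
rewrite unitmxE det_diag unitfE; apply/prodf_neq0 => v _.
by rewrite mxE invr_eq0 gt_eqF // sqrtr_gt0.
Qed.

Lemma invDG_JG :
  invmx (DG E w) *m JG E w = 1%:M + sqrt_deg_inv *m norm_adj *m invmx sqrt_deg_inv.
Proof.
have invDH : invmx (DH E w) = sqrt_deg_inv *m sqrt_deg_inv.
  rewrite invmx_diag => [|v]; last by rewrite mxE gt_eqF.
  rewrite mulmx_diag; congr diag_mx; apply/rowP => v; rewrite !mxE -invfM.
  by rewrite -expr2 sqr_sqrtr ?ltW.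
rewrite /JG (DG_DH w hrank) mulmxDr mulVmx ?DH_unit // /norm_adj !mulmxA.
by rewrite mulmxK ?sqrt_deg_inv_unit // invDH.
Qed.

Lemma least_eigenvalue_lt1 (v : 'I_n) lam :
  (forall mu, eigenvalue (invmx (DG E w) *m JG E w) mu -> lam <= mu) -> lam < 1.
Proof.
move=> lam_min; have [u uv Auv] := AG_neighbour v.
have [mu Nmu mu_lt0] : exists2 mu, eigenvalue norm_adj mu & mu < 0.
  apply: (symmetric_hollow_neg_eigenvalue trmx_norm_adj _ uv).
    by move=> x; rewrite norm_adjE AG_diag mul0r.
  by rewrite norm_adjE divr_gt0 // mulr_gt0 ?sqrtr_gt0.
have := lam_min (1 + mu).
rewrite invDG_JG eigenvalue_add1 ?eigenvalue_conj ?sqrt_deg_inv_unit //.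
by move=> /(_ isT); lra.
Qed.

End NormalizedAdjacency.

Theorem lemma8 (R : rcfType) (n m : nat) (E : 'I_m -> {set 'I_n}) (w : 'I_m -> R)
  (hEinj : injective E)
  (hw : forall i, 0 < w i)
  (hdeg : forall v, 0 < degH E w v)
  (hrank : forall i, (2 <= rankE E i)%N)
  (lam : R) (f : 'cV[R]_n)
  (hlam : eigenvalue (invmx (DG E w) *m JG E w) lam)
  (hmin : forall mu, eigenvalue (invmx (DG E w) *m JG E w) mu -> lam <= mu)
  (hf0 : f != 0)
  (hf : (invmx (DG E w) *m JG E w) *m f = lam *: f)
  (r : 'cV[R]_n)
  (hr : is_Jr E w (fun v => f v ord0) (fun v => r v ord0)) :
  dotv f (JH_of E w r) / quad f (DH E w) <= lam /\
  ((forall i, (2 < rankE E i)%N) ->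
     dotv f (JH_of E w r) / quad f (DH E w) < lam).
Proof.
have [re [r_sum re_spec]] := hr.
have parts_le i := hyper_part_le_clique_part hrank
  (re_spec i).1 (re_spec i).2.1 (re_spec i).2.2.1 (hw i).
have q_gt0 : 0 < quad f (DH E w) by apply: quad_diag_gt0 => // v; rewrite mxE.
have JG_parts : \sum_i clique_part E w f i = lam * quad f (DH E w).
  by rewrite -quad_JG //; apply: quad_eigvec; rewrite ?DH_unit // -(DG_DH w hrank).
have sum_le : \sum_i hyper_part E w f (re i) <= \sum_i clique_part E w f i.
  by apply: ler_sum => i _; exact: (parts_le i).1.
rewrite (dotv_JH E w f r_sum) ler_pdivrMr // ltr_pdivrMr // -JG_parts.
split=> // rank_gt2; rewrite lt_neqAle sum_le andbT; apply/eqP => sum_eq.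
have /forall_inP parts_eq :
    [forall (i | true), hyper_part E w f (re i) == clique_part E w f i].
  by rewrite -(leif_sum (fun i _ => leif_eq (parts_le i).1)).2 sum_eq.
have sum_DH : \sum_i hyper_part E w f (re i) = quad f (DH E w).
  rewrite quad_DH; apply: eq_bigr => i _.
  by apply: (parts_le i).2 (rank_gt2 i) _; apply/eqP/parts_eq.
have [v _ | no_vertex] := pickP (@predT 'I_n); last first.
  by move: q_gt0; rewrite quad_diag big_pred0 ?ltxx.
have := least_eigenvalue_lt1 hw hdeg hrank v hmin.
by move: sum_eq; rewrite sum_DH JG_parts; nra.
Qed.
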